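(* Consider Algorithm PDFPM (described in the context), and let $\bar{x}^k$ be the point computed in Step 2 at some iteration $k$ with current parameter $\sigma_k$. Suppose Assumptions A1, A2 and A3 (described in the context) hold. If $\sigma_k\|\bar{x}^k-x^k\|\ge\epsilon$ and $$\sigma_k\ge\max_{j\in\mathcal{J}}\Big[\frac{5L_j+\overline{B}}{1-\alpha}+\frac{2n^{\frac{1-\beta_j}{2}}M_j+2M_j}{(\beta_j+1)(1-\alpha)}\epsilon^{\beta_j-1}\Big]^{\frac1{\beta_j}},$$ then for all $j\in\mathcal{J}$ $$F_j(\bar{x}^k)\le F_j(x^k)-\frac{\alpha}{2}\sigma_k\|\bar{x}^k-x^k\|^2\quad\text{and}\quad F_j(\bar{x}^k)\le F_j(x^k)-\frac{\alpha\epsilon^2}{2\sigma_k}.$$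
   Context: Setting: $m,n\ge1$, $\mathcal{J}=\{1,\dots,m\}$, $F=(F_1,\dots,F_m)$ with $F_j=f_j+h_j$, where $f_j:\mathbb{R}^n\to\mathbb{R}$ is differentiable and $h_j:\mathbb{R}^n\to\mathbb{R}\cup\{+\infty\}$ is convex. For each $j$ a map $g_{f_j}:\mathbb{R}^n\times[0,1]\to\mathbb{R}^n$ is given with $\lim_{\lambda\to0}g_{f_j}(x,\lambda)=\nabla f_j(x)$. $\|\cdot\|$ is the Euclidean norm (spectral norm for matrices). Algorithm PDFPM: choose $x^0\in\mathbb{R}^n$, $\alpha,\epsilon\in(0,1)$, $\sigma_0\ge1$, symmetric positive semidefinite $B_j^0\in\mathbb{R}^{n\times n}$; set $k=0$. Step 1: choose $0<\lambda_k\le \epsilon/(\sigma_k\sqrt n)$ and compute $g_{f_j}(x^k,\lambda_k)$ for each $j$. Step 2: let $\bar{x}^k$ be the (unique) minimizer of $\Phi_{x^k}(x)+\frac{\sigma_k}{2}\|x-x^k\|^2$, where $\Phi_{x^k}(x)=\max_{j\in\mathcal{J}}[\langle g_{f_j}(x^k,\lambda_k)+\frac12B_j^k(x-x^k),x-x^k\rangle+h_j(x)-h_j(x^k)]$. Step 3: if $\sigma_k\|\bar{x}^k-x^k\|\ge\epsilon$ go to Step 4; otherwise stop. Step 4: if $F_j(\bar{x}^k)\le F_j(x^k)-\frac{\alpha\epsilon^2}{2\sigma_k}$ for all $j\in\mathcal{J}$, set $x^{k+1}=\bar{x}^k$, $\sigma_{k+1}=\sigma_k$, choose symmetric positive semidefinite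 $B_j^{k+1}$, set $k\leftarrow k+1$ and go to Step 1; otherwise replace $\sigma_k$ by $2\sigma_k$ and go to Step 1 (same $k$). Assumption A1: there is $\overline{B}\ge0$ with $\|B_j^k\|\le\overline{B}$ for all iterations $k$ and all $j\in\mathcal{J}$. Assumption A2: for each $j$ there are $L_j,M_j>0$ and $\beta_j\in(0,1]$ with $f_j(y)\le f_j(x)+\langle\nabla f_j(x),y-x\rangle+\frac{L_j}{2}\|y-x\|^2+\frac{M_j}{\beta_j+1}\|y-x\|^{\beta_j+1}$ for all $x,y\in\mathbb{R}^n$. Assumption A3: with the same $L_j,M_j,\beta_j$, $\|\nabla f_j(x)-g_{f_j}(x,\lambda)\|\le\lambda\frac{\sqrt n L_j}{2}+\sqrt n\frac{M_j}{\beta_j+1}\lambda^{\beta_j}$ for all $x$ and all $\lambda\in(0,1]$. *)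

From HB Require Import structures.
From mathcomp Require Import all_boot all_order all_algebra.
From mathcomp Require Import all_classical all_reals all_analysis.
Set Implicit Arguments. Unset Strict Implicit. Unset Printing Implicit Defensive.
Import Order.TTheory GRing.Theory Num.Theory.
Import numFieldNormedType.Exports.
Local Open Scope ring_scope.

Definition dotv (R : realType) (n : nat) (u v : 'cV[R]_n) : R :=
  \sum_(i < n) u i ord0 * v i ord0.

Definition enorm (R : realType) (n : nat) (u : 'cV[R]_n) : R :=
  Num.sqrt (dotv u u).

(* Spectral (operator) norm bound ||B|| <= c, unfolded from the definition
   ||B|| = sup_{x <> 0} ||Bx|| / ||x|| (Euclidean norms). *)
Definition spec_norm_le (R : realType) (n : nat) (B : 'M[R]_n) (c : R) : Prop :=
  forall x : 'cV[R]_n, enorm (B *m x) <= c * enorm x.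

Definition sym_psd (R : realType) (n : nat) (B : 'M[R]_n) : Prop :=
  B^T = B /\ forall x : 'cV[R]_n, 0 <= dotv x (B *m x).

Definition has_gradient (R : realType) (n : nat)
    (f : 'cV[R]_n -> R) (grad : 'cV[R]_n -> 'cV[R]_n) : Prop :=
  forall x, differentiable f x /\ forall v, 'd f x v = dotv (grad x) v.

Definition ext_convex (R : realType) (n : nat) (h : 'cV[R]_n -> \bar R) : Prop :=
  (forall x, h x != -oo%E) /\
  forall (x y : 'cV[R]_n) (t : R), 0 <= t <= 1 ->
    (h (t *: x + (1 - t) *: y)%R <= t%:E * h x + (1 - t)%:E * h y)%E.

From HB Require Import structures.
From mathcomp Require Import all_boot all_order all_algebra.
From mathcomp Require Import all_classical all_reals all_analysis.
From mathcomp Require Import ring lra.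

(* Write d = xbar - xk and r = |d|.  Comparing the value of the Step 2
   subproblem at xbar with its value at y = xk shows that, for every j,
     <g_j, d> + <B_j d, d>/2 + h_j(xbar) - h_j(xk) + sigma r^2/2 <= 0.
   Adding the descent inequality A2 and dropping <B_j d, d> >= 0 bounds
   F_j(xbar) - F_j(xk) by <grad f_j - g_j, d> + L_j r^2/2
   + M_j r^(beta_j+1)/(beta_j+1) - sigma r^2/2.  The choice of lambda and the
   Step 3 test give sqrt(n) lambda <= r, so A3 and Cauchy-Schwarz bound the
   gradient error term by L_j r^2/2 + n^((1-beta_j)/2) M_j r^(beta_j+1)/(beta_j+1).
   Finally, since eps^(beta_j-1) (sigma r)^(1-beta_j) >= 1, the lower bound on
   sigma makes these error terms at most (1-alpha) sigma r^2/2. *)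

Set Implicit Arguments. Unset Strict Implicit. Unset Printing Implicit Defensive.
Import Order.TTheory GRing.Theory Num.Theory.
Import numFieldNormedType.Exports.
Local Open Scope classical_set_scope.
Local Open Scope ring_scope.

Section EuclideanSpace.
Variables (R : realType) (n : nat).
Implicit Types u v w : 'cV[R]_n.

Lemma dotvC u v : dotv u v = dotv v u.
Proof. by apply: eq_bigr => i _; rewrite mulrC. Qed.

Lemma dotvDl u v w : dotv (u + v) w = dotv u w + dotv v w.
Proof. by rewrite /dotv -big_split; apply: eq_bigr => i _; rewrite mxE mulrDl. Qed.

Lemma dotvZl a u w : dotv (a *: u) w = a * dotv u w.
Proof. by rewrite /dotv mulr_sumr; apply: eq_bigr => i _; rewrite mxE mulrA. Qed.

Lemma dotvBl u v w : dotv (u - v) w = dotv u w - dotv v w.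
Proof. by rewrite dotvDl -scaleN1r dotvZl mulN1r. Qed.

Lemma dotv0l v : dotv 0 v = 0.
Proof. by rewrite -(scale0r 0) dotvZl mul0r. Qed.

Lemma dotv0r u : dotv u 0 = 0.
Proof. by rewrite dotvC dotv0l. Qed.

Lemma dotvv_ge0 u : 0 <= dotv u u.
Proof. by apply: sumr_ge0 => i _; rewrite -expr2 sqr_ge0. Qed.

Lemma enorm_ge0 u : 0 <= enorm u.
Proof. exact: sqrtr_ge0. Qed.

Lemma enorm_sqr u : enorm u ^+ 2 = dotv u u.
Proof. by rewrite sqr_sqrtr // dotvv_ge0. Qed.

Lemma enorm0 : enorm (0 : 'cV[R]_n) = 0.
Proof. by rewrite /enorm dotv0l sqrtr0. Qed.

Lemma enorm_eq0 u : enorm u = 0 -> u = 0.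
Proof.
move=> u0; have uu0 : dotv u u = 0 by rewrite -enorm_sqr u0 expr0n.
apply/matrixP => i k; rewrite (ord1 k) mxE.
have sq_ge0 (j : 'I_n) : true -> 0 <= u j ord0 * u j ord0.
  by rewrite -expr2 sqr_ge0.
by move: (psumr_eq0P sq_ge0 uu0 (i := i) isT) => /eqP; rewrite mulf_eq0 orbb => /eqP.
Qed.

Lemma dotv_polar u v (a b : R) :
  2 * (a * b) * dotv u v <= b ^+ 2 * dotv u u + a ^+ 2 * dotv v v.
Proof.
have : 0 <= \sum_(i < n) (b * u i ord0 - a * v i ord0) ^+ 2.
  by apply: sumr_ge0 => i _; rewrite sqr_ge0.
suff -> : \sum_(i < n) (b * u i ord0 - a * v i ord0) ^+ 2
  = b ^+ 2 * dotv u u + a ^+ 2 * dotv v v - 2 * (a * b) * dotv u v.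
  by rewrite subr_ge0.
rewrite /dotv !mulr_sumr -big_split -sumrB /=.
by apply: eq_bigr => i _; ring.
Qed.

Lemma dotv_le_enorm_mul u v : dotv u v <= enorm u * enorm v.
Proof.
have [/enorm_eq0 ->|u0] := eqVneq (enorm u) 0; first by rewrite dotv0l enorm0 mul0r.
have [/enorm_eq0 ->|v0] := eqVneq (enorm v) 0; first by rewrite dotv0r enorm0 mulr0.
have uv0 : 0 < 2 * (enorm u * enorm v).
  by rewrite mulr_gt0 // mulr_gt0 // lt0r ?u0 ?v0 enorm_ge0.
rewrite -(ler_pM2l uv0); apply: le_trans (dotv_polar u v (enorm u) (enorm v)) _.
by rewrite -!enorm_sqr le_eqVlt; apply/orP; left; apply/eqP; ring.
Qed.

End EuclideanSpace.

Section RealPowers.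
Variable R : realType.

Lemma sqrt_mul_powR_le (x l r b : R) : 0 < x -> 0 <= b -> 0 <= l ->
  Num.sqrt x * l <= r -> Num.sqrt x * l `^ b <= x `^ ((1 - b) / 2) * r `^ b.
Proof.
move=> x0 b0 l0 xlr; have sx0 : 0 <= Num.sqrt x by exact: sqrtr_ge0.
have -> : Num.sqrt x = x `^ ((1 - b) / 2) * (Num.sqrt x) `^ b.
  rewrite -powR12_sqrt ?ltW // -powRrM -powRD ?(gt_eqF x0) ?implybT //.
  by rewrite (_ : _ + _ = 2^-1) //; field.
rewrite -mulrA -powRM //; apply: ler_wpM2l; first exact: powR_ge0.
apply: ge0_ler_powR; rewrite // nnegrE ?mulr_ge0 //.
exact: le_trans (mulr_ge0 sx0 l0) xlr.
Qed.

Lemma powR_le_scaled (b s e r : R) : b <= 1 -> 0 < e -> 0 < s -> e <= s * r ->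
  r `^ b <= e `^ (b - 1) * (s `^ (1 - b) * r).
Proof.
move=> b1 e0 s0 esr; have r0 : 0 < r.
  by rewrite -(pmulr_rgt0 _ s0); exact: lt_le_trans esr.
have eb : e `^ (b - 1) * e `^ (1 - b) = 1.
  by rewrite -powRD ?(gt_eqF e0) ?implybT // (_ : _ + _ = 0) ?powRr0 //; ring.
have rb : r `^ (1 - b) * r `^ b = r.
  by rewrite -powRD ?(gt_eqF r0) ?implybT // subrK powRr1 // ltW.
rewrite -[X in X <= _]mul1r -{1}eb -mulrA; apply: ler_wpM2l; first exact: powR_ge0.
rewrite -[X in _ <= _ * X]rb mulrA; apply: ler_wpM2r; first exact: powR_ge0.
rewrite -powRM ?(ltW s0) ?(ltW r0) //; apply: ge0_ler_powR => //; first by rewrite subr_ge0.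
  by rewrite nnegrE ltW.
by rewrite nnegrE ltW // mulr_gt0.
Qed.

Lemma powR_step_bound (b s e r X Y : R) : 0 < b <= 1 -> 1 <= s -> 0 < e ->
  e <= s * r -> 0 <= X -> 0 <= Y -> X + Y * e `^ (b - 1) <= s `^ b ->
  X * r + Y * r `^ b <= s * r.
Proof.
move=> /andP[b0 b1] s1 e0 esr X0 Y0 XYs; have s0 : 0 < s := lt_le_trans ltr01 s1.
have r0 : 0 < r by rewrite -(pmulr_rgt0 _ s0); exact: lt_le_trans esr.
set t := s `^ (1 - b).
have t1 : 1 <= t by rewrite -(powRr0 s) ler_powR // subr_ge0.
have st : s = s `^ b * t by rewrite -powRD ?(gt_eqF s0) ?implybT // addrC subrK powRr1 ?ltW.
have Xr : X * r <= X * (t * r) by rewrite ler_wpM2l // ler_peMl // ltW.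
have Yr : Y * r `^ b <= Y * e `^ (b - 1) * (t * r).
  by rewrite -mulrA ler_wpM2l // powR_le_scaled.
apply: le_trans (lerD Xr Yr) _.
rewrite -mulrDl [in X in _ <= X]st -mulrA; apply: ler_wpM2r => //.
by rewrite mulr_ge0 ?(le_trans ler01 t1) ?ltW.
Qed.

Lemma powR_inv_le (b z s : R) : 0 < b -> 0 <= z -> 0 <= s ->
  z `^ (1 / b) <= s -> z <= s `^ b.
Proof.
move=> b0 z0 s0 zs.
rewrite -[z]powRr1 // -(mulVf (lt0r_neq0 b0)) -div1r powRrM.
by apply: ge0_ler_powR => //; rewrite ?nnegrE ?powR_ge0 ?ltW.
Qed.

End RealPowers.

Section DescentEstimates.
Variable R : realType.

Lemma inexact_gradient_error_le (x l r L M b : R) :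
  0 < x -> 0 <= b -> 0 <= L -> 0 <= M -> 0 <= l -> Num.sqrt x * l <= r ->
  l * (Num.sqrt x * L / 2) + Num.sqrt x * M / (b + 1) * l `^ b
    <= r * (L / 2) + M / (b + 1) * (x `^ ((1 - b) / 2) * r `^ b).
Proof.
move=> x0 b0 L0 M0 l0 xlr; apply: lerD.
  rewrite (_ : l * _ = Num.sqrt x * l * (L / 2)); last by ring.
  by apply: ler_wpM2r; rewrite ?divr_ge0.
rewrite (_ : Num.sqrt x * M / _ * _ = M / (b + 1) * (Num.sqrt x * l `^ b)); last by ring.
apply: ler_wpM2l; last exact: sqrt_mul_powR_le.
by rewrite divr_ge0 // ltW // ltr_wpDl.
Qed.

Lemma smoothing_param_le (l e s c r : R) : 0 < s -> 0 < c ->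
  l <= e / (s * c) -> e <= s * r -> c * l <= r.
Proof.
move=> s0 c0; rewrite ler_pdivlMr ?mulr_gt0 // => le esr.
have -> : c * l = l * (s * c) / s by field; rewrite gt_eqF.
by rewrite ler_pdivrMr // [r * s]mulrC (le_trans le esr).
Qed.

Lemma smoothing_param_le1 (l e s c : R) : 1 <= s -> 1 <= c -> 0 <= e -> e <= 1 ->
  l <= e / (s * c) -> l <= 1.
Proof.
move=> s1 c1 e0 e1 le; apply: le_trans le _.
rewrite ler_pdivrMr ?mulr_gt0 ?(lt_le_trans ltr01) //.
by apply: le_trans e1 _; rewrite ler_peMr // mulr_ege1.
Qed.

Lemma sigma_step_condition (a e s r L M b Bbar N : R) :
  0 < a < 1 -> 0 < e -> 1 <= s -> e <= s * r -> 0 <= L -> 0 <= M ->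
  0 < b <= 1 -> 0 <= Bbar -> 0 <= N ->
  ((5 * L + Bbar) / (1 - a)
     + (2 * N * M + 2 * M) / ((b + 1) * (1 - a)) * e `^ (b - 1)) `^ (1 / b) <= s ->
  L * r + (N + 1) * M / (b + 1) * r `^ b <= (1 - a) / 2 * (s * r).
Proof.
move=> /andP[a0 a1] e0 s1 esr L0 M0 /[dup] b01 /andP[b0 _] B0 N0 Zs.
have a1' : 0 < 1 - a by rewrite subr_gt0.
have b1' : 0 < b + 1 by rewrite ltr_wpDl ?ltW.
have s0 : 0 < s := lt_le_trans ltr01 s1.
have r0 : 0 <= r by rewrite -(pmulr_rge0 _ s0) (le_trans (ltW e0)).
set X := (5 * L + Bbar) / (1 - a).
set Y := (2 * N * M + 2 * M) / ((b + 1) * (1 - a)).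
have X0 : 0 <= X by rewrite /X divr_ge0 ?(ltW a1') ?addr_ge0 ?mulr_ge0.
have Y0 : 0 <= Y.
  by rewrite /Y divr_ge0 ?mulr_ge0 ?(ltW a1') ?(ltW b1') ?addr_ge0 ?mulr_ge0.
have XY0 : 0 <= X + Y * e `^ (b - 1) by rewrite addr_ge0 // mulr_ge0 // powR_ge0.
have := powR_step_bound b01 s1 e0 esr X0 Y0 (powR_inv_le b0 XY0 (ltW s0) Zs).
move/(ler_wpM2l (ltW (divr_gt0 a1' (ltr0Sn _ 1)))); apply: le_trans.
have -> : (1 - a) / 2 * (X * r + Y * r `^ b)
    = (5 * L + Bbar) / 2 * r + (N + 1) * M / (b + 1) * r `^ b.
  by rewrite /X /Y; field; rewrite ?gt_eqF.
have : 0 <= L * r by rewrite mulr_ge0.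
have : 0 <= Bbar * r by rewrite mulr_ge0.
lra.
Qed.

Lemma model_decrease (a s r L M b N fx fy hx hy dg dgrad q : R) :
  dg + 2^-1 * q + (hy - hx) + s / 2 * r ^+ 2 <= 0 -> 0 <= q -> 0 <= r ->
  fy <= fx + dgrad + L / 2 * r ^+ 2 + M / (b + 1) * (r `^ b * r) ->
  dgrad - dg <= (r * (L / 2) + M / (b + 1) * (N * r `^ b)) * r ->
  L * r + (N + 1) * M / (b + 1) * r `^ b <= (1 - a) / 2 * (s * r) ->
  fy + hy <= fx + hx - a / 2 * s * r ^+ 2.
Proof.
move=> model q0 r0 descent err /(ler_wpM2r r0) step.
rewrite expr2 in model *; lra.
Qed.

Lemma sqr_eps_decrease_le (a e s r : R) : 0 <= a -> 0 < s -> 0 <= e -> e <= s * r ->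
  a * e ^+ 2 / (2 * s) <= a / 2 * s * r ^+ 2.
Proof.
move=> a0 s0 e0 esr.
have -> : a / 2 * s * r ^+ 2 = a / (2 * s) * (s * r) ^+ 2 by field; rewrite gt_eqF.
rewrite mulrAC; apply: ler_wpM2l; first by rewrite divr_ge0 // mulr_ge0 // ltW.
by rewrite lerXn2r // nnegrE (le_trans e0).
Qed.

End DescentEstimates.

Section SubproblemStep.
Variables (R : realType) (n : nat).

Lemma inexact_gradient_inner_le (gr gl d : 'cV[R]_n) (l L M b : R) :
  (0 < n)%N -> 0 <= b -> 0 <= L -> 0 <= M -> 0 <= l ->
  Num.sqrt n%:R * l <= enorm d ->
  enorm (gr - gl) <= l * (Num.sqrt n%:R * L / 2)
                     + Num.sqrt n%:R * M / (b + 1) * l `^ b ->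
  dotv gr d - dotv gl d
    <= (enorm d * (L / 2) + M / (b + 1) * (n%:R `^ ((1 - b) / 2) * enorm d `^ b))
       * enorm d.
Proof.
move=> n0 b0 L0 M0 l0 lsn err; rewrite -dotvBl.
apply: le_trans (dotv_le_enorm_mul _ _) _; apply: ler_wpM2r; first exact: enorm_ge0.
by apply: le_trans err (inexact_gradient_error_le _ _ _ _ _ _); rewrite ?ltr0n.
Qed.

Lemma max_model_at_minimizer_le0 (m : nat) (phi : 'I_m -> 'cV[R]_n -> \bar R)
    (x xbar : 'cV[R]_n) (s : R) :
  (forall j, phi j x <= 0)%E ->
  (forall y, \big[maxe/-oo]_(j < m) phi j xbar + (s / 2 * enorm (xbar - x) ^+ 2)%:E
     <= \big[maxe/-oo]_(j < m) phi j y + (s / 2 * enorm (y - x) ^+ 2)%:E)%E ->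
  forall j, (phi j xbar + (s / 2 * enorm (xbar - x) ^+ 2)%:E <= 0)%E.
Proof.
move=> phix0 xbar_min j; have := xbar_min x.
rewrite subrr enorm0 expr0n mulr0 adde0 => max_le.
apply: le_trans (le_trans _ max_le) _; first by rewrite leeD2r // le_bigmax.
exact: bigmax_le.
Qed.

End SubproblemStep.

Theorem theorem1 (R : realType) (m n : nat)
  (f : 'I_m -> 'cV[R]_n -> R) (grad : 'I_m -> 'cV[R]_n -> 'cV[R]_n)
  (h : 'I_m -> 'cV[R]_n -> \bar R)
  (g : 'I_m -> 'cV[R]_n -> R -> 'cV[R]_n)
  (L M beta : 'I_m -> R) (Bbar : R)
  (alpha eps sigma lambda : R)
  (B : 'I_m -> 'M[R]_n) (xk xbar : 'cV[R]_n) :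
  (0 < m)%N -> (0 < n)%N ->
  (forall j, has_gradient (f j) (grad j)) ->
  (forall j, ext_convex (h j)) ->
  (forall j x, (fun l => g j x l) @ 0^'+ --> grad j x) ->
  0 < alpha < 1 -> 0 < eps < 1 -> 1 <= sigma ->
  0 < lambda <= eps / (sigma * Num.sqrt n%:R) ->
  (* current iterate lies in the domain of every h_j *)
  (forall j, h j xk \is a fin_num) ->
  (forall j, sym_psd (B j)) ->
  (* xbar: minimizer of the Step 2 subproblem *)
  (forall y : 'cV[R]_n,
     (\big[maxe/-oo]_(j < m)
        ((dotv (g j xk lambda + 2^-1 *: (B j *m (xbar - xk))) (xbar - xk))%:E
           + (h j xbar - h j xk))
      + (sigma / 2 * enorm (xbar - xk) ^+ 2)%:E
     <= \big[maxe/-oo]_(j < m)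
        ((dotv (g j xk lambda + 2^-1 *: (B j *m (y - xk))) (y - xk))%:E
           + (h j y - h j xk))
      + (sigma / 2 * enorm (y - xk) ^+ 2)%:E)%E) ->
  (* Assumption A1 (at the current iteration) *)
  0 <= Bbar -> (forall j, spec_norm_le (B j) Bbar) ->
  (* Assumption A2 *)
  (forall j, 0 < L j /\ 0 < M j /\ 0 < beta j <= 1) ->
  (forall j (x y : 'cV[R]_n),
     f j y <= f j x + dotv (grad j x) (y - x) + L j / 2 * enorm (y - x) ^+ 2
              + M j / (beta j + 1) * enorm (y - x) `^ (beta j + 1)) ->
  (* Assumption A3 *)
  (forall j x (l : R), 0 < l <= 1 ->
     enorm (grad j x - g j x l)
       <= l * (Num.sqrt n%:R * L j / 2)
          + Num.sqrt n%:R * M j / (beta j + 1) * l `^ (beta j)) ->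
  (* Step 3 test passed *)
  eps <= sigma * enorm (xbar - xk) ->
  \big[Num.max/0]_(j < m)
     (((5 * L j + Bbar) / (1 - alpha)
       + (2 * (n%:R `^ ((1 - beta j) / 2)) * M j + 2 * M j)
           / ((beta j + 1) * (1 - alpha)) * eps `^ (beta j - 1)) `^ (1 / beta j))
    <= sigma ->
  forall j,
    ((f j xbar)%:E + h j xbar
       <= (f j xk)%:E + h j xk - (alpha / 2 * sigma * enorm (xbar - xk) ^+ 2)%:E
     /\ (f j xbar)%:E + h j xbar
       <= (f j xk)%:E + h j xk - (alpha * eps ^+ 2 / (2 * sigma))%:E)%E.
Proof.
move=> _ n0 _ h_convex _ /[dup] a01 /andP[a0 _] /andP[e0 e1] s1 /andP[l0 l_le]
  h_xk B_psd xbar_min Bbar0 _ LMbeta descent_ineq grad_err step_test sigma_ge j.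
have [L0 [M0 /[dup] b01 /andP[b0 _]]] := LMbeta j.
set r := enorm (xbar - xk) in step_test *.
have s0 : 0 < sigma := lt_le_trans ltr01 s1.
have r0 : 0 < r by rewrite -(pmulr_rgt0 _ s0) (lt_le_trans e0).
have sn1 : 1 <= Num.sqrt n%:R :> R by rewrite -{1}sqrtr1 ler_sqrt ?ler0n // ler1n.
pose phi i y := ((dotv (g i xk lambda + 2^-1 *: (B i *m (y - xk))) (y - xk))%:E
  + (h i y - h i xk))%E.
have phi_xk i : (phi i xk <= 0)%E by rewrite /phi subrr dotv0r subee ?add0e.
move: (max_model_at_minimizer_le0 phi_xk xbar_min j).
rewrite /phi; case: (h j xk) (h_xk j) => [ha||] // _.
case Ehb : (h j xbar) => [hb||] //=; last by have := (h_convex j).1 xbar; rewrite Ehb.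
rewrite -!EFinD lee_fin dotvDl dotvZl => model.
have Bq : 0 <= dotv (B j *m (xbar - xk)) (xbar - xk).
  by rewrite dotvC; exact: (B_psd j).2.
have l01 : 0 < lambda <= 1 by rewrite l0 (smoothing_param_le1 s1 sn1 (ltW e0) (ltW e1) l_le).
have err := inexact_gradient_inner_le n0 (ltW b0) (ltW L0) (ltW M0) (ltW l0)
  (smoothing_param_le s0 (lt_le_trans ltr01 sn1) l_le step_test) (grad_err j xk _ l01).
have descent := descent_ineq j xk xbar.
rewrite powRD ?powRr1 ?(ltW r0) ?(gt_eqF r0) ?implybT // in descent.
have step := sigma_step_condition a01 e0 s1 step_test (ltW L0) (ltW M0) b01 Bbar0
  (powR_ge0 _ _) (le_trans (le_bigmax _ _ j) sigma_ge).
have dec := model_decrease model Bq (ltW r0) descent err step.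
rewrite !lee_fin; split=> //; apply: le_trans dec _.
by rewrite lerD2l lerN2 sqr_eps_decrease_le // ltW.
Qed.
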